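(* Let $A$ and $B$ be independent and identically distributed real random variables with $\mathbb{E}[A]=0$ and $\operatorname{Var}(A)=1$. Then \[ \mathbb{E}\big[|A^2-B^2|\big]+4\,\big(\mathbb{E}\big[|A-B|\big]\big)^2\;\ge\;2 . \] *)

From mathcomp Require Import all_boot all_order all_algebra.
From mathcomp Require Import all_classical all_reals all_analysis.
Set Implicit Arguments.
Unset Strict Implicit.
Unset Printing Implicit Defensive.
Import Order.TTheory GRing.Theory Num.Theory.
Local Open Scope classical_set_scope.
Local Open Scope ring_scope.
Local Open Scope ereal_scope.

Definition indep_RV2 d (T : measurableType d) (R : realType)
  (P : probability T R) (A B : {RV P >-> R}) : Prop :=
  forall S1 S2 : set R, measurable S1 -> measurable S2 ->
    P (A @^-1` S1 `&` B @^-1` S2) = P (A @^-1` S1) * P (B @^-1` S2).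

Definition ident_distr d (T : measurableType d) (R : realType)
  (P : probability T R) (A B : {RV P >-> R}) : Prop :=
  forall S : set R, measurable S -> distribution P A S = distribution P B S.

(* Let a = E|A|.  Pointwise x^2 + y^2 <= |x^2 - y^2| + 2|x||y|; taking
   expectations, with E A^2 = E B^2 = 1 and E|A||B| = a^2 by independence,
   gives 2 <= E|A^2 - B^2| + 2 a^2.  The joint law of (A, B) is the product of the
   marginals, so by Tonelli E|A - B| = E_x E_y |x - B|, and Jensen for
   |x - .| gives E_y |x - B| >= |x - E B| = |x|; hence a <= E|A - B| and
   2 a^2 <= 4 (E|A - B|)^2. *)

From HB Require Import structures.
From mathcomp Require Import all_boot all_order all_algebra.
From mathcomp Require Import all_classical all_reals all_analysis.
From mathcomp Require Import measurable_realfun lra.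
Import Order.TTheory GRing.Theory Num.Theory.
Local Open Scope classical_set_scope.
Local Open Scope ring_scope.
Local Open Scope ereal_scope.

Lemma sqr_add_le_norm_sub_sqr (R : realDomainType) (x y : R) :
  (x ^+ 2 + y ^+ 2 <= `|x ^+ 2 - y ^+ 2| + 2 * (`|x| * `|y|))%R.
Proof.
rewrite -(real_normK (num_real x)) -(real_normK (num_real y)).
have := normr_ge0 x; have := normr_ge0 y.
move: `|x|%R `|y|%R => u v u0 v0.
have [uv|vu] := leP u v.
- rewrite ler0_norm; last by rewrite subr_le0 ler_sqr.
  nra.
- rewrite ger0_norm; last by rewrite subr_ge0 ler_sqr // ltW.
  nra.
Qed.

Lemma abs_sub_expectation_le {d} {T : measurableType d} {R : realType}
    {mu : probability T R} {f : T -> R} (x : R) :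
  mu.-integrable setT (EFin \o f) ->
  (`|x - fine 'E_mu[f]|)%:E <= 'E_mu[fun t => `|x - f t|%R].
Proof.
move=> intf; have /integrableP[mf _] := intf.
have icst := finite_measure_integrable_cst mu x measurableT.
have Ef : 'E_mu[f] = (fine 'E_mu[f])%:E.
  by rewrite fineK // unlock integrable_fin_num.
rewrite -abse_EFin.
have -> : (x - fine 'E_mu[f])%:E = \int[mu]_t ((x - f t)%R)%:E.
  rewrite [in RHS](eq_integral (fun t => x%:E - (f t)%:E)) //.
  rewrite integralB_EFin //.
  rewrite EFinB -Ef unlock; congr (_ - _).
  by rewrite -[LHS](expectation_cst mu x) unlock.
rewrite unlock; under [X in _ <= X]eq_integral do rewrite -abse_EFin.
apply: le_abse_integral => //.
by apply/measurable_EFinP/measurable_funB => //; exact/measurable_EFinP.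
Qed.

Section nonnegative_expectation.
Context {d} {T : measurableType d} {R : realType} (P : probability T R).

Lemma ge0_expectationD {f g : T -> R} :
  measurable_fun setT f -> measurable_fun setT g ->
  (forall w, 0 <= f w)%R -> (forall w, 0 <= g w)%R ->
  'E_P[f \+ g] = 'E_P[f] + 'E_P[g].
Proof.
move=> mf mg f0 g0; rewrite !unlock -ge0_integralD //.
- by move=> ? _; rewrite lee_fin.
- exact/measurable_EFinP.
- by move=> ? _; rewrite lee_fin.
- exact/measurable_EFinP.
Qed.

Lemma ge0_expectationZl (k : R) {f : T -> R} :
  measurable_fun setT f -> (forall w, 0 <= f w)%R -> (0 <= k)%R ->
  'E_P[fun w => k * f w]%R = k%:E * 'E_P[f].
Proof.
move=> mf f0 k0; rewrite !unlock; under eq_integral do rewrite EFinM.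
rewrite ge0_integralZl_EFin //; last exact/measurable_EFinP.
by move=> ? _; rewrite lee_fin.
Qed.

Lemma variance_centered (X : T -> R) :
  'E_P[X] = 0 -> 'V_P[X] = 'E_P[fun w => (X w ^+ 2)%R].
Proof.
move=> EX0; rewrite /variance covariance.unlock EX0 fine0.
congr expectation; apply/funext => w.
by change ((X w - 0) * (X w - 0) = X w ^+ 2)%R; rewrite subr0 expr2.
Qed.

Lemma sqr_expectation_lty_integrable (X : T -> R) : measurable_fun setT X ->
  'E_P[fun w => (X w ^+ 2)%R] < +oo -> P.-integrable setT (EFin \o X).
Proof.
move=> mX EX2; apply/integrableP; split; first exact/measurable_EFinP.
have mX2 : measurable_fun setT (fun w => X w ^+ 2)%R.
  exact: measurableT_comp (exprn_measurable 2) mX.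
have X_le w : (`|X w| <= 1 + X w ^+ 2)%R.
  by have [X0|X0] := leP 0%R (X w); [rewrite ger0_norm|rewrite ltr0_norm]; nra.
have -> : \int[P]_w `|(EFin \o X) w| = 'E_P[fun w => `|X w|%R].
  by rewrite unlock; apply: eq_integral.
apply: (le_lt_trans (expectation_le _ _ _ _ (aeW _ X_le))) => //.
- by apply: measurableT_comp => //; exact: normr_measurable.
- by apply: measurable_funD => //; exact: measurable_cst.
- by move=> w; rewrite addr_ge0 // sqr_ge0.
rewrite (ge0_expectationD (f := cst 1%R)) // => [|w]; last exact: sqr_ge0.
by rewrite expectation_cst lte_add_pinfty // ltry.
Qed.

End nonnegative_expectation.

Section identical_distribution.
Context {d} {T : measurableType d} {R : realType} {P : probability T R}.
Context {X Y : {RV P >-> R}}.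
Hypothesis XY_ident : ident_distr X Y.

Lemma ident_distr_integral (f : R -> \bar R) :
  \int[distribution P X]_x f x = \int[distribution P Y]_x f x.
Proof. by apply: eq_measure_integral => S mS _; exact: XY_ident. Qed.

Lemma ident_distr_ge0_expectation (f : R -> R) :
  measurable_fun setT f -> (forall r, 0 <= f r)%R ->
  'E_P[f \o X] = 'E_P[f \o Y].
Proof.
move=> mf f0; have mEf : measurable_fun setT (EFin \o f).
  exact/measurable_EFinP.
rewrite !unlock -!(ge0_integral_distribution _ mEf) //.
exact: ident_distr_integral.
Qed.

Lemma ident_distr_integrable :
  P.-integrable setT (EFin \o X) -> P.-integrable setT (EFin \o Y).
Proof.
move=> /integrableP[_ Xfin]; apply/integrableP; split.
  exact/measurable_EFinP/measurable_funP.
have := ident_distr_ge0_expectation _ (@normr_measurable _ setT)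
  (@normr_ge0 _ _).
by rewrite unlock => /= <-.
Qed.

Lemma ident_distr_expectation :
  P.-integrable setT (EFin \o X) -> 'E_P[X] = 'E_P[Y].
Proof.
move=> intX; have intY := ident_distr_integrable intX.
rewrite !unlock -!(integral_distribution (@EFin_measurable R setT)) //.
exact: ident_distr_integral.
Qed.

End identical_distribution.

Section independent_pair.
Context {d} {T : measurableType d} {R : realType} {P : probability T R}.
Context {X Y : {RV P >-> R}}.

Definition RV_pair : T -> R * R := fun w => (X w, Y w).

HB.instance Definition _ := isMeasurableFun.Build _ _ _ _ RV_pair
  (measurable_fun_pair (measurable_funP X) (measurable_funP Y)).

Hypothesis XY_indep : indep_RV2 X Y.

Lemma distribution_pair_indep (E : set (R * R)) : measurable E ->
  distribution P RV_pair E = (distribution P X \x distribution P Y) E.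
Proof.
move=> mE; symmetry.
by apply: product_measure_unique => // S1 S2; exact: XY_indep.
Qed.

Lemma ge0_integral_indep (f : R * R -> \bar R) :
  measurable_fun setT f -> (forall z, 0 <= f z) ->
  \int[P]_w f (X w, Y w) =
  \int[distribution P X]_x \int[distribution P Y]_y f (x, y).
Proof.
move=> mf f0; rewrite -(fubini_tonelli1 f mf f0).
rewrite -[LHS](ge0_integral_distribution RV_pair mf f0).
by apply: eq_measure_integral => E mE _; exact: distribution_pair_indep.
Qed.

Lemma ge0_expectation_indepM (f g : R -> R) :
  measurable_fun setT f -> measurable_fun setT g ->
  (forall r, 0 <= f r)%R -> (forall r, 0 <= g r)%R ->
  'E_P[fun w => (f (X w) * g (Y w))%R] = 'E_P[f \o X] * 'E_P[g \o Y].
Proof.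
move=> mf mg f0 g0; rewrite !unlock.
have mfg : measurable_fun setT (fun z : R * R => (f z.1 * g z.2)%:E).
  by apply/measurable_EFinP/measurable_funM; exact: measurableT_comp.
rewrite (ge0_integral_indep _ mfg) => [|z]; last by rewrite lee_fin mulr_ge0.
have inner x : \int[distribution P Y]_y (f x * g y)%:E =
    (f x)%:E * \int[distribution P Y]_y (g y)%:E.
  under eq_integral do rewrite EFinM.
  rewrite ge0_integralZl_EFin // => [y _|]; first by rewrite lee_fin.
  exact/measurable_EFinP.
under eq_integral do rewrite inner.
rewrite ge0_integralZr //.
- by congr (_ * _); apply: ge0_integral_distribution => //;
    exact/measurable_EFinP.
- exact/measurable_EFinP.
- by move=> ? _; rewrite lee_fin.
- by apply: integral_ge0 => ? _; rewrite lee_fin.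
Qed.

Lemma expectation_abs_le_abs_sub :
  P.-integrable setT (EFin \o Y) -> 'E_P[Y] = 0 ->
  'E_P[fun w => `|X w|%R] <= 'E_P[fun w => `|X w - Y w|%R].
Proof.
move=> intY EY0.
have intEFin : (distribution P Y).-integrable setT EFin.
  exact: (integrable_pushforward (measurable_funP Y) (@EFin_measurable R setT)
    intY measurableT).
have EY0' : 'E_(distribution P Y)[id] = 0.
  rewrite -EY0 !unlock.
  exact: (integral_distribution (X:=Y) (@EFin_measurable R setT)).
have mf : measurable_fun setT (fun z : R * R => (`|z.1 - z.2|)%:E).
  apply/measurable_EFinP; apply: measurableT_comp; first exact: normr_measurable.
  exact: measurable_funB measurable_fst measurable_snd.
have mabs : measurable_fun setT (fun x : R => (`|x|)%:E).
  by apply/measurable_EFinP; exact: normr_measurable.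
rewrite !unlock (ge0_integral_indep _ mf) //.
rewrite -(ge0_integral_distribution X mabs) //.
apply: ge0_le_integral => //.
  exact: (measurable_fun_fubini_tonelli_F _ mf).
move=> x _; have := abs_sub_expectation_le x intEFin.
by rewrite EY0' fine0 subr0 unlock.
Qed.

Lemma expectation_sqr_add_le :
  'E_P[fun w => (X w ^+ 2)%R] + 'E_P[fun w => (Y w ^+ 2)%R] <=
  'E_P[fun w => `|X w ^+ 2 - Y w ^+ 2|%R] +
  2%:E * ('E_P[fun w => `|X w|%R] * 'E_P[fun w => `|Y w|%R]).
Proof.
have mX : measurable_fun setT X := measurable_funP X.
have mY : measurable_fun setT Y := measurable_funP Y.
have msqr : measurable_fun setT (fun r : R => r ^+ 2)%R.
  exact: exprn_measurable.
have mabs : measurable_fun setT (fun r : R => `|r|)%R by exact: normr_measurable.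
have mX2 := measurableT_comp msqr mX; have mY2 := measurableT_comp msqr mY.
have mXY : measurable_fun setT (fun w => `|X w| * `|Y w|)%R.
  by apply: measurable_funM; exact: measurableT_comp.
have mD : measurable_fun setT (fun w => `|X w ^+ 2 - Y w ^+ 2|)%R.
  by apply: measurableT_comp => //; exact: measurable_funB.
have m2XY : measurable_fun setT (fun w => 2 * (`|X w| * `|Y w|))%R.
  exact: measurable_funM.
have XY0 w : (0 <= 2 * (`|X w| * `|Y w|))%R by rewrite !mulr_ge0.
rewrite -(ge0_expectation_indepM (fun r => `|r|%R) (fun r => `|r|%R)) //.
rewrite -ge0_expectationZl //.
rewrite -(ge0_expectationD P mX2 mY2 (fun w => sqr_ge0 _)
  (fun w => sqr_ge0 _)).
rewrite -(ge0_expectationD P mD m2XY (fun w => normr_ge0 _) XY0).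
apply: expectation_le; [exact: measurable_funD|exact: measurable_funD| | |].
- by move=> w /=; rewrite addr_ge0 // sqr_ge0.
- by move=> w /=; rewrite addr_ge0.
- by apply: aeW => w /=; exact: sqr_add_le_norm_sub_sqr.
Qed.

End independent_pair.

Theorem mainTheorem1 (d : measure_display) (T : measurableType d)
  (R : realType) (P : probability T R) (A B : {RV P >-> R}) :
  indep_RV2 A B -> ident_distr A B ->
  'E_P[A] = 0%E -> 'V_P[A] = 1%E ->
  (2%:E <= 'E_P[fun w => (`|A w ^+ 2 - B w ^+ 2|)%R]
           + 4%:E * ('E_P[fun w => (`|A w - B w|)%R] * 'E_P[fun w => (`|A w - B w|)%R]))%E.
Proof.
move=> AB_indep AB_ident EA VA.
have msqr : measurable_fun setT (fun r : R => r ^+ 2)%R.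
  exact: exprn_measurable.
have EA2 : 'E_P[fun w => (A w ^+ 2)%R] = 1 by rewrite -variance_centered.
have EB2 : 'E_P[fun w => (B w ^+ 2)%R] = 1.
  rewrite -EA2 (ident_distr_ge0_expectation AB_ident _ msqr) // => r.
  exact: sqr_ge0.
have intA : P.-integrable setT (EFin \o A).
  apply: sqr_expectation_lty_integrable; last by rewrite EA2 ltry.
  exact: measurable_funP.
have intB := ident_distr_integrable AB_ident intA.
have EB0 : 'E_P[B] = 0 by rewrite -(ident_distr_expectation AB_ident intA).
have EabsB : 'E_P[fun w => `|B w|%R] = 'E_P[fun w => `|A w|%R].
  by rewrite (ident_distr_ge0_expectation AB_ident _ (@normr_measurable _ setT)
    (@normr_ge0 _ _)).
have a_le_m := expectation_abs_le_abs_sub AB_indep intB EB0.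
have a0 : 0 <= 'E_P[fun w => `|A w|%R] by apply: expectation_ge0.
have := expectation_sqr_add_le AB_indep; rewrite EA2 EB2 EabsB => sqr_le.
rewrite (_ : 2%:E = 1 + 1) // (le_trans sqr_le) // leeD2l //.
apply: lee_pmul => //; first by rewrite mule_ge0.
  by rewrite lee_fin ler_nat.
exact: lee_pmul.
Qed.
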